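(* Let $\delta$ be a Displacement calculus natural deduction proof of $\alpha_1:A_1,\ldots,\alpha_n:A_n\vdash\gamma:C$. Then there is a proof net with the same hypotheses $A_1,\ldots,A_n$ whose abstract proof structure contracts (by a finite sequence of the contractions in the context) to a single comb with conclusion $C$ whose sequence of premisses, read as a string, is $\gamma$.
   Context: Strings. String terms are built from a countably infinite set of variables (each of sort $0$) and a separator constant $\mathbf{1}$ by an associative concatenation $+$ (with empty string $\epsilon$). The sort of a string term is its number of occurrences of $\mathbf{1}$. For $k\in\{>,<\}\cup\{1,2,3,\ldots\}$ and strings $\alpha$ (of sort $\geq 1$, resp. $\geq k$ if $k$ is an integer) and $\beta$: write $\alpha=\alpha'+\mathbf{1}+\alpha''$ where the displayed $\mathbf{1}$ is the first occurrence of $\mathbf{1}$ if $k={>}$, the last one if $k={<}$, and the $k$-th one if $k$ is an integer; then $\alpha\times_k\beta=\alpha'+\beta+\alpha''$. Formulas. Atomic formulas have fixed sorts. Complex formulas are $A\bullet B$, $A\backslash C$, $C/B$, $A\odot_k B$, $A\downarrow_k C$, $C\uparrow_k B$ with sorts $s(A\bullet B)=s(A)+s(B)$, $s(A\backslash C)=s(C)-s(A)$, $s(C/B)=s(C)-s(B)$, $s(A\odot_k B)=s(A)+s(B)-1$, $s(A\downarrow_k C)=s(C)+1-s(A)$, $s(C\uparrow_k B)=s(C)+1-s(B)$; a formula is well formed only when all these sorts are $\geq 0$ and the wrap operations required below are defined. Natural deduction. Judgements are $\alpha:A$ with $\alpha$ a string of sort $s(A)$. Hypotheses (and withdrawn hypotheses)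 of sort $m$ are labelled $p_0+\mathbf{1}+\cdots+\mathbf{1}+p_m$ with fresh distinct variables $p_i$. Rules: $\backslash E$: from $\alpha:A$ and $\gamma:A\backslash C$ infer $\alpha+\gamma:C$; $\backslash I$: from a derivation of $\alpha+\gamma:C$ with hypothesis $\alpha:A$, withdraw it and infer $\gamma:A\backslash C$; $/E$: from $\gamma:C/B$ and $\beta:B$ infer $\gamma+\beta:C$; $/I$: from a derivation of $\gamma+\beta:C$ withdraw $\beta:B$, infer $\gamma:C/B$; $\bullet I$: from $\alpha:A,\beta:B$ infer $\alpha+\beta:A\bullet B$; $\bullet E$: from $\delta:A\bullet B$ and a derivation of $\gamma[\alpha+\beta]:C$ from hypotheses $\alpha:A,\beta:B$, withdraw these and infer $\gamma[\delta]:C$; $\downarrow_k E$: from $\alpha:A$ and $\gamma:A\downarrow_k C$ infer $\alpha\times_k\gamma:C$; $\downarrow_k I$: from a derivation of $\alpha\times_k\gamma:C$ withdraw $\alpha:A$, infer $\gamma:A\downarrow_k C$; $\uparrow_k E$: from $\gamma:C\uparrow_k B$ and $\beta:B$ infer $\gamma\times_k\beta:C$; $\uparrow_k I$: from a derivation of $\gamma\times_k\beta:C$ withdraw $\beta:B$, infer $\gamma:C\uparrow_k B$; $\odot_k I$: from $\alpha:A,\beta:B$ infer $\alpha\times_k\beta:A\odot_k B$; $\odot_k E$: from $\delta:A\odot_k B$ and a derivation of $\gamma[\alpha\times_k\beta]:C$ from $\alpha:A,\beta:B$, withdraw these and infer $\gamma[\delta]:C$. Links. A link joins an ordered list of premiss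 formulas and an ordered list of conclusion formulas. Tensor links: $[L/]$ premisses $C/B,B$, conclusion $C$, label $+$; $[L\backslash]$ premisses $A,A\backslash C$, conclusion $C$, label $+$; $[R\bullet]$ premisses $A,B$, conclusion $A\bullet B$, label $+$; $[L\uparrow_k]$ premisses $C\uparrow_k B,B$, conclusion $C$, label $\times_k$; $[L\downarrow_k]$ premisses $A, A\downarrow_k C$, conclusion $C$, label $\times_k$; $[R\odot_k]$ premisses $A,B$, conclusion $A\odot_k B$, label $\times_k$. Par links (one formula is marked as main): $[L\bullet]$ premiss $A\bullet B$ (main), conclusions $A,B$; $[L\odot_k]$ premiss $A\odot_k B$ (main), conclusions $A,B$; $[R/]$ premiss $C$, conclusions $C/B$ (main), $B$; $[R\backslash]$ premiss $C$, conclusions $A$, $A\backslash C$ (main); $[R\uparrow_k]$ premiss $C$, conclusions $C\uparrow_k B$ (main), $B$; $[R\downarrow_k]$ premiss $C$, conclusions $A$, $A\downarrow_k C$ (main). A proof structure is a set of formula occurrences and links instantiating these schemes such that each formula is premiss of at most one link and conclusion of at most one link. Its hypotheses are formulas that are conclusion of no link; its conclusions are formulas that are premiss of no link. Its auxiliary inputs are the non-main conclusions of par links (both conclusions for $[L\bullet]$, $[L\odot_k]$). Proof nets. A proof structure corresponds to a natural deduction proof if it is built from it as follows: a hypothesis occurrence gives a single vertex; each $E$ rule for $\backslash,/,\downarrow_k,\uparrow_k$ gives the corresponding tensor $L$-link connecting the structures of its premisses; each $I$ rule for $\bullet,\odot_k$ gives the tensor $R$-link; each $I$ rule for $\backslash,/,\downarrow_k,\uparrow_k$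 gives the corresponding par $R$-link whose non-main conclusion is the withdrawn hypothesis occurrence; each $E$ rule for $\bullet,\odot_k$ gives the par $L$-link with premiss the major premiss and conclusions the withdrawn hypotheses $A,B$. A proof net is a proof structure corresponding to some natural deduction proof. Combs and abstract proof structures. A comb is a link with an ordered (possibly empty) list of premisses and one conclusion distinct from them; premisses are vertices or occurrences of the constant $\mathbf{1}$ (sort 1); the sort of a comb is the sum of the sorts of its premisses. The abstract proof structure of a proof structure is obtained by: replacing each $+$-labelled tensor link with premisses $v_1,v_2$ and conclusion $v_3$ by a comb with premisses $v_1,v_2$ and conclusion $v_3$; replacing each hypothesis $A_i$ of sort $m$ by an unlabelled vertex that is the conclusion of a comb with premisses $p_0,\mathbf{1},p_1,\ldots,\mathbf{1},p_m$ where $\alpha_i=p_0+\mathbf{1}+\cdots+\mathbf{1}+p_m$ is the label of that hypothesis; replacing each auxiliary input $A$ of sort $m$ by an unlabelled vertex that is the conclusion of a comb with premisses $v_0,\mathbf{1},v_1,\ldots,\mathbf{1},v_m$, where $v_0,\ldots,v_m$ are fresh sort-0 vertices and the par link is connected to all of $v_0,\ldots,v_m$ instead of $A$ (the expansion of that auxiliary input); keeping the label of the conclusion of the structure and making all other vertices unlabelled (each keeping the sort of its formula). Contractions (sequences $\alpha_1,\alpha_2,\beta,\gamma_1,\gamma_2$ of comb premisses may be empty). $[+]$: a comb with premisses $\alpha_1,w,\alpha_2$ and conclusion $v$, where $w$ is the conclusion of a comb with premisses $\beta$, becomes one comb with premisses $\alpha_1,\beta,\alpha_2$ and conclusion $v$.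 $[\times_k]$: a $\times_k$ tensor link with conclusion $v$ whose first premiss is the conclusion of a comb with premisses $\alpha_1,\mathbf{1},\alpha_2$ and whose second premiss is the conclusion of a comb with premisses $\beta$ becomes a comb with premisses $\alpha_1,\beta,\alpha_2$ and conclusion $v$, where the displayed $\mathbf{1}$ is the one selected by $k$ ($\alpha_1$ of sort $0$ if $k={>}$, $\alpha_2$ of sort 0 if $k={<}$, $\alpha_1$ of sort $k-1$ if $k$ is an integer). In the logical contractions, a par link with main vertex $v$ (or premiss $v_1$ for $\bullet,\odot_k$) is removed together with its connections; $e_A, e_B$ denote the expansions of its auxiliary inputs. $[\backslash]$: par $[R\backslash]$ whose premiss is the conclusion of a comb with premisses $e_A,\beta$: result comb $\beta$ with conclusion $v$. $[/]$: symmetric with comb premisses $\beta,e_B$. $[\uparrow_k]$: par $[R\uparrow_k]$ whose premiss is the conclusion of a comb with premisses $\alpha_1,e_B,\alpha_2$: result comb $\alpha_1,\mathbf{1},\alpha_2$ with conclusion $v$, with the same sort restriction on $\alpha_1,\alpha_2$ as for $[\times_k]$. $[\downarrow_k]$: par $[R\downarrow_k]$ whose premiss is the conclusion of a comb with premisses $e',\beta,e''$ where $e_A=e',\mathbf{1},e''$ with the displayed $\mathbf{1}$ selected by $k$: result comb $\beta$ with conclusion $v$. $[\bullet]$: par $[L\bullet]$ with premiss $v_1$ and a comb with premisses $\gamma_1,e_A,e_B,\gamma_2$ and conclusion $v_2$: result comb $\gamma_1,v_1,\gamma_2$ with conclusion $v_2$. $[\odot_k]$: par $[L\odot_k]$ with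 premiss $v_1$, $e_A=e',\mathbf{1},e''$ with the $\mathbf{1}$ selected by $k$, and a comb with premisses $\gamma_1,e',e_B,e'',\gamma_2$ and conclusion $v_2$: result comb $\gamma_1,v_1,\gamma_2$ with conclusion $v_2$. *)

From Stdlib Require Import List Arith Permutation Relations.
Import ListNotations.

Inductive wk : Type := WGt | WLt | WN (n : nat).

(* Given the sorts m1 (left part) and m2 (right part) around a displayed
   separator 1, [ksel k m1 m2] says that this 1 is the one selected by k:
   first (left part of sort 0), last (right part of sort 0), or k-th. *)
Definition ksel (k : wk) (m1 m2 : nat) : Prop :=
  match k with
  | WGt => m1 = 0
  | WLt => m2 = 0
  | WN n => m1 + 1 = n
  end.

Inductive formula : Type :=
| Atom (name : nat) (s : nat)
| Prod (A B : formula)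
| Under (A C : formula)
| Over (C B : formula)
| Wrap (k : wk) (A B : formula)
| Infix (k : wk) (A C : formula)
| Extr (k : wk) (C B : formula).

Fixpoint fsort (F : formula) : nat :=
  match F with
  | Atom _ s => s
  | Prod A B => fsort A + fsort B
  | Under A C => fsort C - fsort A
  | Over C B => fsort C - fsort B
  | Wrap _ A B => fsort A + fsort B - 1
  | Infix _ A C => fsort C + 1 - fsort A
  | Extr _ C B => fsort C + 1 - fsort B
  end.

(* the wrap operation ×_k on a first argument of sort m is defined *)
Definition kok (k : wk) (m : nat) : Prop :=
  match k with
  | WGt | WLt => 1 <= m
  | WN n => 1 <= n <= m
  end.

Fixpoint wf (F : formula) : Prop :=
  match F with
  | Atom _ _ => True
  | Prod A B => wf A /\ wf B
  | Under A C => wf A /\ wf C /\ fsort A <= fsort C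
  | Over C B => wf C /\ wf B /\ fsort B <= fsort C
  | Wrap k A B => wf A /\ wf B /\ kok k (fsort A)
  | Infix k A C => wf A /\ wf C /\ fsort A <= fsort C + 1 /\ kok k (fsort A)
  | Extr k C B => wf C /\ wf B /\ fsort B <= fsort C + 1
                  /\ kok k (fsort C + 1 - fsort B)
  end.

Inductive sym : Type := SVar (x : nat) | SOne.
Definition dstring := list sym.

Fixpoint ssort (s : dstring) : nat :=
  match s with
  | [] => 0
  | SOne :: t => S (ssort t)
  | SVar _ :: t => ssort t
  end.

Definition wrap (k : wk) (a b s : dstring) : Prop :=
  exists a1 a2, a = a1 ++ SOne :: a2 /\ ksel k (ssort a1) (ssort a2)
                /\ s = a1 ++ b ++ a2.

Definition hlab (p0 : nat) (ps : list nat) : dstring :=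
  SVar p0 :: flat_map (fun p => [SOne; SVar p]) ps.

(* ---------- natural deduction ----------
   deriv G s C u : a natural deduction proof of  G |- s : C, where G is the list
   of open hypotheses (label, formula) and u lists all variables used in the
   labels of all (open or withdrawn) hypotheses of the proof; these are required
   to be pairwise distinct (fresh distinct variables). *)
Inductive deriv : list (dstring * formula) -> dstring -> formula -> list nat -> Type :=
| d_hyp p0 ps A :
    NoDup (p0 :: ps) -> length ps = fsort A -> wf A ->
    deriv [(hlab p0 ps, A)] (hlab p0 ps) A (p0 :: ps)
| d_underE G1 G2 a g A C u1 u2 :
    deriv G1 a A u1 -> deriv G2 g (Under A C) u2 -> NoDup (u1 ++ u2) ->
    deriv (G1 ++ G2) (a ++ g) C (u1 ++ u2)
| d_underI G G' a g A C u :
    deriv G (a ++ g) C u -> Permutation G ((a, A) :: G') -> wf (Under A C) ->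
    deriv G' g (Under A C) u
| d_overE G1 G2 g b B C u1 u2 :
    deriv G1 g (Over C B) u1 -> deriv G2 b B u2 -> NoDup (u1 ++ u2) ->
    deriv (G1 ++ G2) (g ++ b) C (u1 ++ u2)
| d_overI G G' g b B C u :
    deriv G (g ++ b) C u -> Permutation G ((b, B) :: G') -> wf (Over C B) ->
    deriv G' g (Over C B) u
| d_prodI G1 G2 a b A B u1 u2 :
    deriv G1 a A u1 -> deriv G2 b B u2 -> NoDup (u1 ++ u2) ->
    deriv (G1 ++ G2) (a ++ b) (Prod A B) (u1 ++ u2)
| d_prodE G1 G2 G2' dl a b g1 g2 A B C u1 u2 :
    deriv G1 dl (Prod A B) u1 -> deriv G2 (g1 ++ a ++ b ++ g2) C u2 ->
    Permutation G2 ((a, A) :: (b, B) :: G2') -> NoDup (u1 ++ u2) ->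
    deriv (G1 ++ G2') (g1 ++ dl ++ g2) C (u1 ++ u2)
| d_infixE k G1 G2 a g s A C u1 u2 :
    deriv G1 a A u1 -> deriv G2 g (Infix k A C) u2 -> wrap k a g s ->
    NoDup (u1 ++ u2) -> deriv (G1 ++ G2) s C (u1 ++ u2)
| d_infixI k G G' a g s A C u :
    deriv G s C u -> Permutation G ((a, A) :: G') -> wrap k a g s ->
    wf (Infix k A C) -> deriv G' g (Infix k A C) u
| d_extrE k G1 G2 g b s B C u1 u2 :
    deriv G1 g (Extr k C B) u1 -> deriv G2 b B u2 -> wrap k g b s ->
    NoDup (u1 ++ u2) -> deriv (G1 ++ G2) s C (u1 ++ u2)
| d_extrI k G G' g b s B C u :
    deriv G s C u -> Permutation G ((b, B) :: G') -> wrap k g b s ->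
    wf (Extr k C B) -> deriv G' g (Extr k C B) u
| d_wrapI k G1 G2 a b s A B u1 u2 :
    deriv G1 a A u1 -> deriv G2 b B u2 -> wrap k a b s -> NoDup (u1 ++ u2) ->
    deriv (G1 ++ G2) s (Wrap k A B) (u1 ++ u2)
| d_wrapE k G1 G2 G2' dl a b s g1 g2 A B C u1 u2 :
    deriv G1 dl (Wrap k A B) u1 -> deriv G2 (g1 ++ s ++ g2) C u2 ->
    Permutation G2 ((a, A) :: (b, B) :: G2') -> wrap k a b s ->
    NoDup (u1 ++ u2) -> deriv (G1 ++ G2') (g1 ++ dl ++ g2) C (u1 ++ u2).

(* ---------- proof structures ----------
   Formula occurrences are vertices (natural numbers) carrying a formula;
   a structure is a list V of (vertex, formula) and a list L of links. *)
Inductive link : Type :=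
| LOverL (cb b c : nat)                 (* [L/]  : C/B, B   |- C      (+)   *)
| LUnderL (a ac c : nat)                (* [L\]  : A, A\C   |- C      (+)   *)
| LProdR (a b ab : nat)                 (* [R•]  : A, B     |- A•B    (+)   *)
| LExtrL (k : wk) (cb b c : nat)        (* [L↑k] : C↑kB, B  |- C      (×k)  *)
| LInfixL (k : wk) (a ac c : nat)       (* [L↓k] : A, A↓kC  |- C      (×k)  *)
| LWrapR (k : wk) (a b ab : nat)        (* [R⊙k] : A, B     |- A⊙kB   (×k)  *)
| LProdL (ab a b : nat)                 (* [L•]  : A•B (main) |- A, B       *)
| LWrapL (k : wk) (ab a b : nat)        (* [L⊙k] : A⊙kB (main) |- A, B      *)
| LOverR (c cb b : nat)                 (* [R/]  : C |- C/B (main), B       *)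
| LUnderR (c a ac : nat)                (* [R\]  : C |- A, A\C (main)       *)
| LExtrR (k : wk) (c cb b : nat)        (* [R↑k] : C |- C↑kB (main), B      *)
| LInfixR (k : wk) (c a ac : nat).      (* [R↓k] : C |- A, A↓kC (main)      *)

Definition lprem (l : link) : list nat :=
  match l with
  | LOverL cb b _ => [cb; b] | LUnderL a ac _ => [a; ac] | LProdR a b _ => [a; b]
  | LExtrL _ cb b _ => [cb; b] | LInfixL _ a ac _ => [a; ac] | LWrapR _ a b _ => [a; b]
  | LProdL ab _ _ => [ab] | LWrapL _ ab _ _ => [ab]
  | LOverR c _ _ => [c] | LUnderR c _ _ => [c] | LExtrR _ c _ _ => [c]
  | LInfixR _ c _ _ => [c]
  end.

Definition lconcl (l : link) : list nat :=
  match l with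
  | LOverL _ _ c | LUnderL _ _ c | LProdR _ _ c
  | LExtrL _ _ _ c | LInfixL _ _ _ c | LWrapR _ _ _ c => [c]
  | LProdL _ a b | LWrapL _ _ a b => [a; b]
  | LOverR _ cb b | LExtrR _ _ cb b => [cb; b]
  | LUnderR _ a ac | LInfixR _ _ a ac => [a; ac]
  end.

Fixpoint vlab (V : list (nat * formula)) (n : nat) : formula :=
  match V with
  | [] => Atom 0 0
  | (m, A) :: t => if Nat.eqb m n then A else vlab t n
  end.

Definition is_hyp (V : list (nat * formula)) (L : list link) (v : nat) : Prop :=
  In v (map fst V) /\ ~ (exists l, In l L /\ In v (lconcl l)).
Definition is_concl (V : list (nat * formula)) (L : list link) (v : nat) : Prop :=
  In v (map fst V) /\ ~ (exists l, In l L /\ In v (lprem l)).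

(* corr d V L h r : the proof structure (V, L) is built from the natural
   deduction proof d as described in the paper; h associates to each open
   hypothesis (identified by its label, whose variables are fresh) its vertex,
   and r is the vertex of the conclusion. *)
Inductive corr : forall {G s C u}, deriv G s C u ->
    list (nat * formula) -> list link -> list (dstring * nat) -> nat -> Prop :=
| c_hyp p0 ps A H1 H2 H3 v :
    corr (d_hyp p0 ps A H1 H2 H3) [(v, A)] [] [(hlab p0 ps, v)] v
| c_underE G1 G2 a g A C u1 u2 d1 d2 H V1 V2 L1 L2 h1 h2 r1 r2 r :
    corr d1 V1 L1 h1 r1 -> corr d2 V2 L2 h2 r2 ->
    NoDup (r :: map fst V1 ++ map fst V2) ->
    corr (@d_underE G1 G2 a g A C u1 u2 d1 d2 H)
      ((r, C) :: V1 ++ V2) (LUnderL r1 r2 r :: L1 ++ L2) (h1 ++ h2) r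
| c_underI G G' a g A C u d P W V L h h' x r0 r :
    corr d V L h r0 -> Permutation h ((a, x) :: h') -> ~ In r (map fst V) ->
    corr (@d_underI G G' a g A C u d P W)
      ((r, Under A C) :: V) (LUnderR r0 x r :: L) h' r
| c_overE G1 G2 g b B C u1 u2 d1 d2 H V1 V2 L1 L2 h1 h2 r1 r2 r :
    corr d1 V1 L1 h1 r1 -> corr d2 V2 L2 h2 r2 ->
    NoDup (r :: map fst V1 ++ map fst V2) ->
    corr (@d_overE G1 G2 g b B C u1 u2 d1 d2 H)
      ((r, C) :: V1 ++ V2) (LOverL r1 r2 r :: L1 ++ L2) (h1 ++ h2) r
| c_overI G G' g b B C u d P W V L h h' x r0 r :
    corr d V L h r0 -> Permutation h ((b, x) :: h') -> ~ In r (map fst V) ->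
    corr (@d_overI G G' g b B C u d P W)
      ((r, Over C B) :: V) (LOverR r0 r x :: L) h' r
| c_prodI G1 G2 a b A B u1 u2 d1 d2 H V1 V2 L1 L2 h1 h2 r1 r2 r :
    corr d1 V1 L1 h1 r1 -> corr d2 V2 L2 h2 r2 ->
    NoDup (r :: map fst V1 ++ map fst V2) ->
    corr (@d_prodI G1 G2 a b A B u1 u2 d1 d2 H)
      ((r, Prod A B) :: V1 ++ V2) (LProdR r1 r2 r :: L1 ++ L2) (h1 ++ h2) r
| c_prodE G1 G2 G2' dl a b g1 g2 A B C u1 u2 d1 d2 P H
    V1 V2 L1 L2 h1 h2 h2' xa xb r1 r2 :
    corr d1 V1 L1 h1 r1 -> corr d2 V2 L2 h2 r2 ->
    Permutation h2 ((a, xa) :: (b, xb) :: h2') ->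
    NoDup (map fst V1 ++ map fst V2) ->
    corr (@d_prodE G1 G2 G2' dl a b g1 g2 A B C u1 u2 d1 d2 P H)
      (V1 ++ V2) (LProdL r1 xa xb :: L1 ++ L2) (h1 ++ h2') r2
| c_infixE k G1 G2 a g s A C u1 u2 d1 d2 Wr H V1 V2 L1 L2 h1 h2 r1 r2 r :
    corr d1 V1 L1 h1 r1 -> corr d2 V2 L2 h2 r2 ->
    NoDup (r :: map fst V1 ++ map fst V2) ->
    corr (@d_infixE k G1 G2 a g s A C u1 u2 d1 d2 Wr H)
      ((r, C) :: V1 ++ V2) (LInfixL k r1 r2 r :: L1 ++ L2) (h1 ++ h2) r
| c_infixI k G G' a g s A C u d P Wr W V L h h' x r0 r :
    corr d V L h r0 -> Permutation h ((a, x) :: h') -> ~ In r (map fst V) ->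
    corr (@d_infixI k G G' a g s A C u d P Wr W)
      ((r, Infix k A C) :: V) (LInfixR k r0 x r :: L) h' r
| c_extrE k G1 G2 g b s B C u1 u2 d1 d2 Wr H V1 V2 L1 L2 h1 h2 r1 r2 r :
    corr d1 V1 L1 h1 r1 -> corr d2 V2 L2 h2 r2 ->
    NoDup (r :: map fst V1 ++ map fst V2) ->
    corr (@d_extrE k G1 G2 g b s B C u1 u2 d1 d2 Wr H)
      ((r, C) :: V1 ++ V2) (LExtrL k r1 r2 r :: L1 ++ L2) (h1 ++ h2) r
| c_extrI k G G' g b s B C u d P Wr W V L h h' x r0 r :
    corr d V L h r0 -> Permutation h ((b, x) :: h') -> ~ In r (map fst V) ->
    corr (@d_extrI k G G' g b s B C u d P Wr W)
      ((r, Extr k C B) :: V) (LExtrR k r0 r x :: L) h' r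
| c_wrapI k G1 G2 a b s A B u1 u2 d1 d2 Wr H V1 V2 L1 L2 h1 h2 r1 r2 r :
    corr d1 V1 L1 h1 r1 -> corr d2 V2 L2 h2 r2 ->
    NoDup (r :: map fst V1 ++ map fst V2) ->
    corr (@d_wrapI k G1 G2 a b s A B u1 u2 d1 d2 Wr H)
      ((r, Wrap k A B) :: V1 ++ V2) (LWrapR k r1 r2 r :: L1 ++ L2) (h1 ++ h2) r
| c_wrapE k G1 G2 G2' dl a b s g1 g2 A B C u1 u2 d1 d2 P Wr H
    V1 V2 L1 L2 h1 h2 h2' xa xb r1 r2 :
    corr d1 V1 L1 h1 r1 -> corr d2 V2 L2 h2 r2 ->
    Permutation h2 ((a, xa) :: (b, xb) :: h2') ->
    NoDup (map fst V1 ++ map fst V2) ->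
    corr (@d_wrapE k G1 G2 G2' dl a b s g1 g2 A B C u1 u2 d1 d2 P Wr H)
      (V1 ++ V2) (LWrapL k r1 xa xb :: L1 ++ L2) (h1 ++ h2') r2.

Definition proof_net (V : list (nat * formula)) (L : list link) : Prop :=
  exists G s C u (d : deriv G s C u) h r, corr d V L h r.

(* vertices: the original formula occurrences, and the fresh sort-0 vertices
   Exp a i (i = 0..m) of the expansion of an auxiliary input a of sort m *)
Inductive avert : Type := Old (n : nat) | Exp (a i : nat).

(* comb premisses: vertices, occurrences of the constant 1, and the label
   variables p_i of hypotheses *)
Inductive item : Type := IV (v : avert) | IOne | IVar (x : nat).

Inductive alink : Type :=
| AComb (prem : list item) (c : avert)
| ATens (k : wk) (v1 v2 v3 : avert)
(* par links: premiss, expansion(s) of the auxiliary input(s), main vertex *)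
| AUnder (c : avert) (eA : list item) (main : avert)
| AOver (c : avert) (eB : list item) (main : avert)
| AExtr (k : wk) (c : avert) (eB : list item) (main : avert)
| AInfix (k : wk) (c : avert) (eA : list item) (main : avert)
| AProd (v1 : avert) (eA eB : list item)
| AWrap (k : wk) (v1 : avert) (eA eB : list item).

Definition expand (a m : nat) : list item :=
  IV (Exp a 0) :: flat_map (fun i => [IOne; IV (Exp a i)]) (seq 1 m).

Definition item_of_sym (x : sym) : item :=
  match x with SVar p => IVar p | SOne => IOne end.

Definition aps_link (V : list (nat * formula)) (l : link) : list alink :=
  let ex a := expand a (fsort (vlab V a)) in
  match l with
  | LOverL cb b c => [AComb [IV (Old cb); IV (Old b)] (Old c)]
  | LUnderL a ac c => [AComb [IV (Old a); IV (Old ac)] (Old c)]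
  | LProdR a b ab => [AComb [IV (Old a); IV (Old b)] (Old ab)]
  | LExtrL k cb b c => [ATens k (Old cb) (Old b) (Old c)]
  | LInfixL k a ac c => [ATens k (Old a) (Old ac) (Old c)]
  | LWrapR k a b ab => [ATens k (Old a) (Old b) (Old ab)]
  | LProdL ab a b =>
      [AProd (Old ab) (ex a) (ex b); AComb (ex a) (Old a); AComb (ex b) (Old b)]
  | LWrapL k ab a b =>
      [AWrap k (Old ab) (ex a) (ex b); AComb (ex a) (Old a); AComb (ex b) (Old b)]
  | LOverR c cb b => [AOver (Old c) (ex b) (Old cb); AComb (ex b) (Old b)]
  | LUnderR c a ac => [AUnder (Old c) (ex a) (Old ac); AComb (ex a) (Old a)]
  | LExtrR k c cb b => [AExtr k (Old c) (ex b) (Old cb); AComb (ex b) (Old b)]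
  | LInfixR k c a ac => [AInfix k (Old c) (ex a) (Old ac); AComb (ex a) (Old a)]
  end.

(* abstract proof structure of (V, L), where hl gives the label of each
   hypothesis vertex *)
Definition aps (V : list (nat * formula)) (L : list link)
    (hl : list (nat * dstring)) : list alink :=
  flat_map (aps_link V) L
  ++ map (fun p => AComb (map item_of_sym (snd p)) (Old (fst p))) hl.

Definition vsort (V : list (nat * formula)) (v : avert) : nat :=
  match v with Old n => fsort (vlab V n) | Exp _ _ => 0 end.

Fixpoint isort (sv : avert -> nat) (s : list item) : nat :=
  match s with
  | [] => 0
  | IV v :: t => sv v + isort sv t
  | IOne :: t => S (isort sv t)
  | IVar _ :: t => isort sv t
  end.

Inductive contr (sv : avert -> nat) : list alink -> list alink -> Prop :=
| k_plus L R a1 a2 b w v :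
    Permutation L (AComb (a1 ++ IV w :: a2) v :: AComb b w :: R) ->
    contr sv L (AComb (a1 ++ b ++ a2) v :: R)
| k_tens L R k v1 v2 v3 a1 a2 b :
    Permutation L (ATens k v1 v2 v3 :: AComb (a1 ++ IOne :: a2) v1
                   :: AComb b v2 :: R) ->
    ksel k (isort sv a1) (isort sv a2) ->
    contr sv L (AComb (a1 ++ b ++ a2) v3 :: R)
| k_under L R c eA b v :
    Permutation L (AUnder c eA v :: AComb (eA ++ b) c :: R) ->
    contr sv L (AComb b v :: R)
| k_over L R c eB b v :
    Permutation L (AOver c eB v :: AComb (b ++ eB) c :: R) ->
    contr sv L (AComb b v :: R)
| k_extr L R k c eB a1 a2 v :
    Permutation L (AExtr k c eB v :: AComb (a1 ++ eB ++ a2) c :: R) ->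
    ksel k (isort sv a1) (isort sv a2) ->
    contr sv L (AComb (a1 ++ IOne :: a2) v :: R)
| k_infix L R k c e1 e2 b v :
    Permutation L (AInfix k c (e1 ++ IOne :: e2) v :: AComb (e1 ++ b ++ e2) c :: R) ->
    ksel k (isort sv e1) (isort sv e2) ->
    contr sv L (AComb b v :: R)
| k_prod L R v1 eA eB g1 g2 v2 :
    Permutation L (AProd v1 eA eB :: AComb (g1 ++ eA ++ eB ++ g2) v2 :: R) ->
    contr sv L (AComb (g1 ++ IV v1 :: g2) v2 :: R)
| k_wrap L R k v1 e1 e2 eB g1 g2 v2 :
    Permutation L (AWrap k v1 (e1 ++ IOne :: e2) eB
                   :: AComb (g1 ++ e1 ++ eB ++ e2 ++ g2) v2 :: R) ->
    ksel k (isort sv e1) (isort sv e2) ->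
    contr sv L (AComb (g1 ++ IV v1 :: g2) v2 :: R).

(* The proof net is read off the derivation rule by rule. Since hypothesis labels
   p0 1 p1 ... 1 pm use fresh distinct variables, the comb of a withdrawn
   hypothesis becomes the comb of the expansion of the new auxiliary input once
   each p_i is renamed into the i-th expansion vertex. Such a renaming fixes all
   vertices and all sorts, so it commutes with contraction and the contraction of
   the premiss carries over; one more logical contraction removes the new par
   link (followed by a [+] contraction for the elimination of products and
   wraps), and a tensor link is absorbed by a single [+] or [×_k] contraction. *)

From Stdlib Require Import List Relations Permutation Lia Arith.
Import ListNotations.

Lemma NoDup_app_iff {X} (l1 l2 : list X) :
  NoDup (l1 ++ l2) <-> NoDup l1 /\ NoDup l2 /\ (forall x, In x l1 -> ~ In x l2).
Proof.
  split.
  - intro H. repeat split.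
    + exact (NoDup_app_remove_r _ _ H).
    + exact (NoDup_app_remove_l _ _ H).
    + induction l1 as [|y t IH]; [easy|]. inversion_clear H as [|? ? Hy Ht].
      intros x [<-|Hx] Hx2; [apply Hy, in_or_app; auto|exact (IH Ht x Hx Hx2)].
  - intros (H1 & H2 & D). now apply NoDup_app.
Qed.

Lemma count_occ_cons_split {X} (dec : forall x y : X, {x = y} + {x <> y}) a l z :
  count_occ dec (a :: l) z = (if dec a z then 1 else 0) + count_occ dec l z.
Proof. cbn. now destruct (dec a z). Qed.

(* Every permutation hypothesis and the goal become equalities of occurrence
   counts, which [lia] combines. *)
Ltac solve_perm dec :=
  repeat match goal with
         | H : Permutation _ _ |- _ =>
             pose proof (proj1 (Permutation_count_occ dec _ _) H); clear H
         end;
  apply (Permutation_count_occ dec);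
  let z := fresh "z" in
  intro z;
  repeat match goal with
         | H : forall x, count_occ _ _ x = _ |- _ => specialize (H z)
         end;
  repeat first [ rewrite count_occ_app in * | rewrite count_occ_cons_split in *
               | rewrite count_occ_nil in * ];
  lia.

Definition alink_eq_dec (l l' : alink) : {l = l'} + {l <> l'}.
Proof. repeat (decide equality || apply list_eq_dec || apply Nat.eq_dec). Defined.

(** * Variables of labels *)

Definition vars (s : dstring) : list nat :=
  flat_map (fun y => match y with SVar p => [p] | SOne => [] end) s.

Definition ctx_vars {X} (G : list (dstring * X)) : list nat := flat_map (fun p => vars (fst p)) G.

Lemma vars_app s t : vars (s ++ t) = vars s ++ vars t.
Proof. apply flat_map_app. Qed.

Lemma vars_hlab p0 ps : vars (hlab p0 ps) = p0 :: ps.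
Proof. cbn. f_equal. induction ps; cbn; congruence. Qed.

Lemma ctx_vars_cons {X} a (x : X) G : ctx_vars ((a, x) :: G) = vars a ++ ctx_vars G.
Proof. reflexivity. Qed.

Lemma ctx_vars_app {X} (G1 G2 : list (dstring * X)) :
  ctx_vars (G1 ++ G2) = ctx_vars G1 ++ ctx_vars G2.
Proof. apply flat_map_app. Qed.

Lemma ctx_vars_perm {X} (G1 G2 : list (dstring * X)) :
  Permutation G1 G2 -> Permutation (ctx_vars G1) (ctx_vars G2).
Proof. apply Permutation_flat_map. Qed.

Lemma wrap_vars k a b s : wrap k a b s -> Permutation (vars s) (vars a ++ vars b).
Proof.
  intros (a1 & a2 & -> & _ & ->). rewrite !vars_app.
  change (vars (SOne :: a2)) with (vars a2). solve_perm Nat.eq_dec.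
Qed.

Record fresh_labels (G : list (dstring * formula)) (l u : list nat) : Prop := {
  fresh_hyp : forall a A, In (a, A) G -> exists p0 ps, a = hlab p0 ps /\ length ps = fsort A;
  fresh_ctx_nodup : NoDup (ctx_vars G);
  fresh_ctx_used : incl (ctx_vars G) u;
  fresh_nodup : NoDup l;
  fresh_incl : incl l (ctx_vars G) }.

Lemma disjoint_used {X} (u1 u2 l1 l2 : list X) :
  NoDup (u1 ++ u2) -> incl l1 u1 -> incl l2 u2 -> forall x, In x l1 -> ~ In x l2.
Proof.
  intros H I1 I2 x H1 H2. apply NoDup_app_iff in H as (_ & _ & D). exact (D x (I1 x H1) (I2 x H2)).
Qed.

Lemma fresh_labels_elim G1 G2 l1 l2 l u1 u2 :
  fresh_labels G1 l1 u1 -> fresh_labels G2 l2 u2 -> NoDup (u1 ++ u2) ->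
  Permutation l (l1 ++ l2) -> fresh_labels (G1 ++ G2) l (u1 ++ u2).
Proof.
  intros [A1 B1 C1 D1 E1] [A2 B2 C2 D2 E2] N P. split; rewrite ?ctx_vars_app.
  - intros a A H. apply in_app_or in H as [H|H]; eauto.
  - apply NoDup_app; auto. eapply disjoint_used; eauto.
  - now apply incl_app_app.
  - apply (Permutation_NoDup (Permutation_sym P)), NoDup_app; auto.
    eapply disjoint_used; eauto; eapply incl_tran; eauto.
  - intros x Hx. apply (Permutation_in _ P) in Hx. now apply (incl_app_app E1 E2).
Qed.

Lemma fresh_labels_drop G G' a A l l' u :
  fresh_labels G l u -> Permutation G ((a, A) :: G') -> Permutation l (vars a ++ l') ->
  fresh_labels G' l' u.
Proof.
  intros [A1 B1 C1 D1 E1] P Pl.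
  pose proof (ctx_vars_perm _ _ P) as PG. cbn [ctx_vars flat_map fst] in PG.
  apply (Permutation_NoDup PG), NoDup_app_iff in B1 as (_ & NG & _).
  apply (Permutation_NoDup Pl), NoDup_app_iff in D1 as (_ & Nl & Dl).
  split; auto.
  - intros b B H. apply A1, (Permutation_in _ (Permutation_sym P)). now right.
  - intros x Hx. apply C1, (Permutation_in _ (Permutation_sym PG)), in_or_app. now right.
  - intros x Hx.
    assert (Hs : In x (ctx_vars G)).
    { apply E1, (Permutation_in _ (Permutation_sym Pl)), in_or_app. now right. }
    apply (Permutation_in _ PG), in_app_or in Hs as [Hs|Hs]; [|exact Hs].
    now destruct (Dl x Hs Hx).
Qed.

Lemma fresh_labels_drop2 G G' a A b B l l' u :
  fresh_labels G l u -> Permutation G ((a, A) :: (b, B) :: G') ->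
  Permutation l (vars a ++ vars b ++ l') -> fresh_labels G' l' u.
Proof.
  intros F P Pl.
  exact (fresh_labels_drop _ _ _ _ _ _ _ (fresh_labels_drop _ _ _ _ _ _ _ F P Pl)
           (Permutation_refl _) (Permutation_refl _)).
Qed.

Lemma fresh_labels_hyp G G' l u a A :
  fresh_labels G l u -> Permutation G ((a, A) :: G') ->
  exists p0 ps, a = hlab p0 ps /\ length ps = fsort A /\ NoDup (p0 :: ps) /\
    forall p, In p (ctx_vars G') -> ~ In p (p0 :: ps).
Proof.
  intros [Hyp N _ _ _] P.
  destruct (Hyp a A) as (p0 & ps & Ea & Len).
  { apply (Permutation_in _ (Permutation_sym P)). now left. }
  pose proof (ctx_vars_perm _ _ P) as PG. cbn [ctx_vars flat_map fst] in PG.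
  rewrite Ea, vars_hlab in PG.
  apply (Permutation_NoDup PG), NoDup_app_iff in N as (Np & _ & D).
  exists p0, ps. repeat split; auto. intros p H1 H2. exact (D p H2 H1).
Qed.

Lemma fresh_labels_hyp2 G G' l u a A b B :
  fresh_labels G l u -> Permutation G ((a, A) :: (b, B) :: G') ->
  exists pa psa pb psb, a = hlab pa psa /\ b = hlab pb psb /\
    length psa = fsort A /\ length psb = fsort B /\ NoDup (pa :: psa) /\ NoDup (pb :: psb) /\
    (forall p, In p (pb :: psb) -> ~ In p (pa :: psa)) /\
    forall p, In p (ctx_vars G') -> ~ In p (pa :: psa) /\ ~ In p (pb :: psb).
Proof.
  intros F P.
  destruct (fresh_labels_hyp _ _ _ _ _ _ F P) as (pa & psa & Ea & Lena & Na & Da).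
  destruct (fresh_labels_hyp _ _ _ _ _ _ F (perm_trans P (perm_swap _ _ _)))
    as (pb & psb & Eb & Lenb & Nb & Db).
  rewrite ctx_vars_cons, Eb, vars_hlab in Da. rewrite ctx_vars_cons, Ea, vars_hlab in Db.
  exists pa, psa, pb, psb. repeat split; auto.
  - intros p Hp. apply Da, in_or_app. now left.
  - apply Da, in_or_app. now right.
  - apply Db, in_or_app. now right.
Qed.

Lemma deriv_fresh_labels G s C u : deriv G s C u -> fresh_labels G (vars s) u.
Proof.
  induction 1 as [p0 ps A N Len _ | G1 G2 a g A C u1 u2 d1 IH1 d2 IH2 N | G G' a g A C u d IH P
    | G1 G2 g b B C u1 u2 d1 IH1 d2 IH2 N | G G' g b B C u d IH P
    | G1 G2 a b A B u1 u2 d1 IH1 d2 IH2 N | G1 G2 G2' dl a b g1 g2 A B C u1 u2 d1 IH1 d2 IH2 P N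
    | k G1 G2 a g s A C u1 u2 d1 IH1 d2 IH2 Wr N | k G G' a g s A C u d IH P Wr
    | k G1 G2 g b s B C u1 u2 d1 IH1 d2 IH2 Wr N | k G G' g b s B C u d IH P Wr
    | k G1 G2 a b s A B u1 u2 d1 IH1 d2 IH2 Wr N
    | k G1 G2 G2' dl a b s g1 g2 A B C u1 u2 d1 IH1 d2 IH2 P Wr N];
    try apply wrap_vars in Wr;
    try solve [ apply (fresh_labels_elim _ _ _ _ _ _ _ IH1 IH2 N);
                rewrite ?vars_app; first [apply Permutation_refl | exact Wr] ].
  - split; cbn [ctx_vars flat_map fst]; rewrite ?app_nil_r, ?vars_hlab; auto using incl_refl.
    intros a B [[= <- <-]|[]]; eauto.
  - apply (fresh_labels_drop _ _ _ _ _ _ _ IH P). now rewrite vars_app.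
  - apply (fresh_labels_drop _ _ _ _ _ _ _ IH P). rewrite vars_app. apply Permutation_app_comm.
  - refine (fresh_labels_elim _ _ _ (vars g1 ++ vars g2) _ _ _ IH1
              (fresh_labels_drop2 _ _ _ _ _ _ _ _ _ IH2 P _) N _);
      rewrite !vars_app; solve_perm Nat.eq_dec.
  - exact (fresh_labels_drop _ _ _ _ _ _ _ IH P Wr).
  - apply (fresh_labels_drop _ _ _ _ _ _ _ IH P). solve_perm Nat.eq_dec.
  - refine (fresh_labels_elim _ _ _ (vars g1 ++ vars g2) _ _ _ IH1
              (fresh_labels_drop2 _ _ _ _ _ _ _ _ _ IH2 P _) N _);
      rewrite !vars_app; solve_perm Nat.eq_dec.
Qed.

(** * Contraction up to the order of links *)

Definition reduces (sv : avert -> nat) (L M : list alink) : Prop :=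
  exists M', clos_refl_trans _ (contr sv) L M' /\ Permutation M' M.

Section Reduction.
Variable sv : avert -> nat.

Lemma contr_perm L K L' : Permutation K L -> contr sv L L' -> contr sv K L'.
Proof.
  intros P H; destruct H; [eapply k_plus|eapply k_tens|eapply k_under|eapply k_over
   |eapply k_extr|eapply k_infix|eapply k_prod|eapply k_wrap]; eauto; eapply perm_trans; eauto.
Qed.

Lemma contr_app_r L M K : contr sv L M -> contr sv (L ++ K) (M ++ K).
Proof.
  intro H; destruct H; cbn;
  [eapply k_plus|eapply k_tens|eapply k_under|eapply k_over
   |eapply k_extr|eapply k_infix|eapply k_prod|eapply k_wrap]; eauto;
  (eapply perm_trans; [apply Permutation_app_tail; eauto|apply Permutation_refl]).
Qed.

Lemma reduces_perm L M : Permutation L M -> reduces sv L M.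
Proof. intro P. exists L. split; [apply rt_refl|exact P]. Qed.

Lemma reduces_step L M : contr sv L M -> reduces sv L M.
Proof. intro H. exists M. split; [now apply rt_step|apply Permutation_refl]. Qed.

Lemma reduces_trans L M N : reduces sv L M -> reduces sv M N -> reduces sv L N.
Proof.
  intros (M' & H1 & P1) (N' & H2 & P2).
  apply clos_rt_rt1n in H2. destruct H2 as [|M0 N' H HM].
  - exists M'. split; [exact H1|eapply perm_trans; eauto].
  - exists N'. split; [|exact P2].
    eapply rt_trans; [exact H1|]. eapply rt_trans; [apply rt_step|apply clos_rt1n_rt, HM].
    exact (contr_perm _ _ _ P1 H).
Qed.

Lemma reduces_app_r L M K : reduces sv L M -> reduces sv (L ++ K) (M ++ K).
Proof.
  intros (M' & H & P). exists (M' ++ K). split; [|now apply Permutation_app_tail].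
  clear P. induction H; [apply rt_step, contr_app_r; auto|apply rt_refl|eapply rt_trans; eauto].
Qed.

Lemma reduces_app L1 L2 M1 M2 :
  reduces sv L1 M1 -> reduces sv L2 M2 -> reduces sv (L1 ++ L2) (M1 ++ M2).
Proof.
  intros R1 R2. eapply reduces_trans; [exact (reduces_app_r _ _ L2 R1)|].
  eapply reduces_trans; [apply reduces_perm, Permutation_app_comm|].
  eapply reduces_trans; [exact (reduces_app_r _ _ M1 R2)|].
  apply reduces_perm, Permutation_app_comm.
Qed.

Lemma reduces_app_l K L M : reduces sv L M -> reduces sv (K ++ L) (K ++ M).
Proof. apply reduces_app, reduces_perm, Permutation_refl. Qed.

End Reduction.

Definition rename_link (f : item -> item) (l : alink) : alink :=
  match l with
  | AComb p c => AComb (map f p) c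
  | ATens k a b c => ATens k a b c
  | AUnder c e v => AUnder c (map f e) v
  | AOver c e v => AOver c (map f e) v
  | AExtr k c e v => AExtr k c (map f e) v
  | AInfix k c e v => AInfix k c (map f e) v
  | AProd v e1 e2 => AProd v (map f e1) (map f e2)
  | AWrap k v e1 e2 => AWrap k v (map f e1) (map f e2)
  end.

Record sort_preserving (sv : avert -> nat) (f : item -> item) : Prop := {
  rename_vertex : forall v, f (IV v) = IV v;
  rename_one : f IOne = IOne;
  rename_var_sort : forall p l, isort sv (f (IVar p) :: l) = isort sv l }.

Section Renaming.
Variables (sv : avert -> nat) (f : item -> item).
Hypothesis Hf : sort_preserving sv f.

Lemma isort_rename l : isort sv (map f l) = isort sv l.
Proof.
  destruct Hf as [Hv Ho Hp].
  induction l as [|[v| |p] t IH]; cbn [map]; rewrite ?Hv, ?Ho, ?Hp; cbn; auto.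
Qed.

Lemma contr_rename L M : contr sv L M -> contr sv (map (rename_link f) L) (map (rename_link f) M).
Proof.
  destruct Hf as [Hv Ho _].
  intros [L0 R a1 a2 b w v P|L0 R k v1 v2 v3 a1 a2 b P K|L0 R c eA b v P|L0 R c eB b v P
   |L0 R k c eB a1 a2 v P K|L0 R k c e1 e2 b v P K|L0 R v1 eA eB g1 g2 v2 P
   |L0 R k v1 e1 e2 eB g1 g2 v2 P K];
  apply (Permutation_map (rename_link f)) in P; cbn in P |- *;
  rewrite ?map_app in P; rewrite ?map_app; cbn in P |- *; rewrite ?Hv, ?Ho in P; rewrite ?Hv, ?Ho.
  - eapply k_plus; eauto.
  - eapply k_tens; eauto. now rewrite !isort_rename.
  - eapply k_under; eauto.
  - eapply k_over; eauto.
  - eapply k_extr; eauto. now rewrite !isort_rename.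
  - eapply k_infix; eauto. now rewrite !isort_rename.
  - eapply k_prod; eauto.
  - eapply k_wrap; eauto. now rewrite !isort_rename.
Qed.

Lemma reduces_rename L M :
  reduces sv L M -> reduces sv (map (rename_link f) L) (map (rename_link f) M).
Proof.
  intros (M' & H & P). exists (map (rename_link f) M'). split; [|now apply Permutation_map].
  clear P. induction H; [apply rt_step, contr_rename; auto|apply rt_refl|eapply rt_trans; eauto].
Qed.

End Renaming.

(** * Discharging hypotheses *)

Notation items s := (map item_of_sym s).

Lemma isort_items sv s : isort sv (items s) = ssort s.
Proof. induction s as [|[p|] t IH]; cbn; auto. Qed.

Fixpoint position (p : nat) (l : list nat) : option nat :=
  match l with
  | [] => None
  | q :: t => if Nat.eqb p q then Some 0 else option_map S (position p t)
  end.

Lemma position_app p pre t : ~ In p pre -> position p (pre ++ p :: t) = Some (length pre).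
Proof.
  induction pre as [|q pre IH]; cbn; intro H; [now rewrite Nat.eqb_refl|].
  destruct (Nat.eqb_spec p q); [now destruct H; left|]. rewrite IH; auto.
Qed.

Lemma position_notin p l : ~ In p l -> position p l = None.
Proof.
  induction l as [|q l IH]; cbn; intro H; auto.
  destruct (Nat.eqb_spec p q); [now destruct H; left|]. rewrite IH; auto.
Qed.

Definition hyp_subst (x : nat) (ps : list nat) (it : item) : item :=
  match it with
  | IVar p => match position p ps with Some i => IV (Exp x i) | None => IVar p end
  | _ => it
  end.

Definition expansion_sorts_zero (sv : avert -> nat) : Prop := forall a i, sv (Exp a i) = 0.

Lemma hyp_subst_sort_preserving sv x ps :
  expansion_sorts_zero sv -> sort_preserving sv (hyp_subst x ps).
Proof. intro Z. split; auto. intros p l. cbn. destruct (position p ps); cbn; rewrite ?Z; auto. Qed.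

Lemma isort_hyp_subst sv x ps s :
  expansion_sorts_zero sv -> isort sv (map (hyp_subst x ps) (items s)) = ssort s.
Proof. intro Z. rewrite isort_rename, isort_items; auto using hyp_subst_sort_preserving. Qed.

Lemma hyp_subst_hlab x p0 ps :
  NoDup (p0 :: ps) -> map (hyp_subst x (p0 :: ps)) (items (hlab p0 ps)) = expand x (length ps).
Proof.
  intro N. unfold hlab, expand. cbn. rewrite Nat.eqb_refl. f_equal.
  change (S O) with (length [p0]). change (p0 :: ps) with ([p0] ++ ps) in N |- *.
  generalize [p0] as pre, N. clear N.
  induction ps as [|q t IH]; intros pre N; cbn; auto.
  rewrite position_app by (intro; apply (NoDup_remove_2 _ _ _ N), in_or_app; auto).
  do 2 f_equal. specialize (IH (pre ++ [q])). rewrite <- app_assoc, length_app, Nat.add_1_r in IH.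
  exact (IH N).
Qed.

Lemma hyp_subst_fresh x ps s :
  (forall p, In p (vars s) -> ~ In p ps) -> map (hyp_subst x ps) (items s) = items s.
Proof.
  induction s as [|[p|] t IH]; cbn; intro H; auto.
  - rewrite position_notin by (apply H; now left). f_equal. apply IH. intros; apply H; now right.
  - f_equal. exact (IH H).
Qed.

Lemma hyp_subst_twice x ps y qs s : (forall p, In p (vars s) -> ~ In p qs) ->
  map (hyp_subst y qs) (map (hyp_subst x ps) (items s)) = map (hyp_subst x ps) (items s).
Proof.
  induction s as [|[p|] t IH]; cbn; intro H; auto.
  - f_equal; [|apply IH; intros; apply H; now right].
    destruct (position p ps); cbn; auto. now rewrite position_notin by (apply H; now left).
  - f_equal. exact (IH H).
Qed.

Definition link_combs (W : list (nat * formula)) (L : list link) : list alink :=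
  flat_map (aps_link W) L.

Definition hyp_combs (h : list (dstring * nat)) : list alink :=
  map (fun p => AComb (items (fst p)) (Old (snd p))) h.

Lemma link_combs_cons W l L : link_combs W (l :: L) = aps_link W l ++ link_combs W L.
Proof. reflexivity. Qed.

Lemma link_combs_app W L1 L2 : link_combs W (L1 ++ L2) = link_combs W L1 ++ link_combs W L2.
Proof. apply flat_map_app. Qed.

Lemma hyp_combs_app h1 h2 : hyp_combs (h1 ++ h2) = hyp_combs h1 ++ hyp_combs h2.
Proof. apply map_app. Qed.

Section VertexFixing.
Variable f : item -> item.
Hypotheses (Hv : forall v, f (IV v) = IV v) (Ho : f IOne = IOne).

Lemma rename_expand a k : map f (expand a k) = expand a k.
Proof.
  unfold expand. cbn. rewrite Hv. f_equal.
  generalize 1. induction k; intro j; cbn; auto. now rewrite Hv, Ho, IHk.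
Qed.

Lemma rename_link_combs W L : map (rename_link f) (link_combs W L) = link_combs W L.
Proof.
  induction L as [|l L IH]; [reflexivity|].
  rewrite link_combs_cons, map_app, IH. f_equal.
  destruct l; cbn [aps_link map rename_link]; now rewrite ?Hv, ?Ho, ?rename_expand.
Qed.

End VertexFixing.

Lemma hyp_subst_hyp_combs x ps h :
  (forall p, In p (ctx_vars h) -> ~ In p ps) ->
  map (rename_link (hyp_subst x ps)) (hyp_combs h) = hyp_combs h.
Proof.
  induction h as [|[a v] t IH]; intro H; [reflexivity|].
  rewrite ctx_vars_cons in H.
  change (hyp_combs ((a, v) :: t)) with (AComb (items a) (Old v) :: hyp_combs t).
  cbn [map rename_link]. rewrite hyp_subst_fresh, IH; auto; intros p Hp; apply H, in_or_app; auto.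
Qed.

Lemma reduces_discharge sv K h h' x p0 ps l r :
  expansion_sorts_zero sv -> NoDup (p0 :: ps) -> Permutation h ((hlab p0 ps, x) :: h') ->
  (forall p, In p (ctx_vars h') -> ~ In p (p0 :: ps)) ->
  map (rename_link (hyp_subst x (p0 :: ps))) K = K ->
  reduces sv (K ++ hyp_combs h) [AComb l (Old r)] ->
  reduces sv (K ++ AComb (expand x (length ps)) (Old x) :: hyp_combs h')
    [AComb (map (hyp_subst x (p0 :: ps)) l) (Old r)].
Proof.
  intros Z N P D HK R.
  apply (reduces_rename sv (hyp_subst x (p0 :: ps))) in R; [|now apply hyp_subst_sort_preserving].
  eapply reduces_trans; [|exact R]. apply reduces_perm.
  rewrite map_app, HK. apply Permutation_app_head.
  symmetry. eapply perm_trans; [apply Permutation_map, (Permutation_map _ P)|].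
  change (hyp_combs ((hlab p0 ps, x) :: h'))
    with (AComb (items (hlab p0 ps)) (Old x) :: hyp_combs h').
  cbn [map rename_link]. now rewrite hyp_subst_hlab, hyp_subst_hyp_combs.
Qed.

Lemma reduces_discharge2 sv K h h' xa pa psa xb pb psb l r :
  expansion_sorts_zero sv -> NoDup (pa :: psa) -> NoDup (pb :: psb) ->
  Permutation h ((hlab pa psa, xa) :: (hlab pb psb, xb) :: h') ->
  (forall p, In p (pb :: psb) -> ~ In p (pa :: psa)) ->
  (forall p, In p (ctx_vars h') -> ~ In p (pa :: psa) /\ ~ In p (pb :: psb)) ->
  map (rename_link (hyp_subst xa (pa :: psa))) K = K ->
  map (rename_link (hyp_subst xb (pb :: psb))) K = K ->
  reduces sv (K ++ hyp_combs h) [AComb l (Old r)] ->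
  reduces sv (K ++ AComb (expand xa (length psa)) (Old xa)
                :: AComb (expand xb (length psb)) (Old xb) :: hyp_combs h')
    [AComb (map (hyp_subst xb (pb :: psb)) (map (hyp_subst xa (pa :: psa)) l)) (Old r)].
Proof.
  intros Z Na Nb P Dab Dh Ka Kb R.
  assert (Da : forall p, In p (ctx_vars ((hlab pb psb, xb) :: h')) -> ~ In p (pa :: psa)).
  { rewrite ctx_vars_cons, vars_hlab. intros p Hp. apply in_app_or in Hp as [Hp|Hp].
    - exact (Dab p Hp).
    - exact (proj1 (Dh p Hp)). }
  assert (Ra := reduces_discharge sv K h _ xa pa psa l r Z Na P Da Ka R).
  change (K ++ ?x :: ?t) with (K ++ [x] ++ t) in Ra. rewrite app_assoc in Ra.
  assert (Kb' : map (rename_link (hyp_subst xb (pb :: psb)))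
                  (K ++ [AComb (expand xa (length psa)) (Old xa)])
                = K ++ [AComb (expand xa (length psa)) (Old xa)]).
  { rewrite map_app, Kb. cbn [map rename_link]. now rewrite rename_expand. }
  change (K ++ ?x :: ?t) with (K ++ [x] ++ t). rewrite app_assoc.
  exact (reduces_discharge sv _ _ h' xb pb psb _ r Z Nb (Permutation_refl _)
           (fun p Hp => proj2 (Dh p Hp)) Kb' Ra).
Qed.

(** * Invariants of the constructed structures *)

Lemma vlab_cons_eq V r A : vlab ((r, A) :: V) r = A.
Proof. cbn. now rewrite Nat.eqb_refl. Qed.

Lemma vlab_cons_ne V r A n : n <> r -> vlab ((r, A) :: V) n = vlab V n.
Proof. intro H. cbn. destruct (Nat.eqb_spec r n); congruence. Qed.

Lemma vlab_app_l V1 V2 n : In n (map fst V1) -> vlab (V1 ++ V2) n = vlab V1 n.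
Proof.
  induction V1 as [|[k A] t IH]; cbn; [tauto|]. intros [->|H].
  - now rewrite Nat.eqb_refl.
  - destruct (Nat.eqb k n); auto.
Qed.

Lemma vlab_app_r V1 V2 n : ~ In n (map fst V1) -> vlab (V1 ++ V2) n = vlab V2 n.
Proof.
  induction V1 as [|[k A] t IH]; cbn; auto. intros H.
  destruct (Nat.eqb_spec k n); [now destruct H; left|]. auto.
Qed.

Definition agree (W V : list (nat * formula)) : Prop :=
  forall v, In v (map fst V) -> vlab W v = vlab V v.

Lemma agree_refl V : agree V V.
Proof. intros v _. reflexivity. Qed.

Lemma agree_cons W V r F : ~ In r (map fst V) -> agree W ((r, F) :: V) -> agree W V.
Proof.
  intros N H v Hv. rewrite <- (vlab_cons_ne V r F) by (intros ->; auto). apply H. now right.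
Qed.

Lemma agree_split W V1 V2 :
  NoDup (map fst V1 ++ map fst V2) -> agree W (V1 ++ V2) -> agree W V1 /\ agree W V2.
Proof.
  intros N A. apply NoDup_app_iff in N as (_ & _ & D).
  split; intros v Hv; [rewrite <- (vlab_app_l V1 V2) by exact Hv
                      |rewrite <- (vlab_app_r V1 V2) by (intro H; exact (D v H Hv))];
    apply A; rewrite map_app; apply in_or_app; auto.
Qed.

Definition hyp_entry (V : list (nat * formula)) (p : dstring * nat) : dstring * formula :=
  (fst p, vlab V (snd p)).

Lemma hyp_entry_agree W V h :
  incl (map snd h) (map fst V) -> agree W V -> map (hyp_entry W) h = map (hyp_entry V) h.
Proof.
  intros I A. apply map_ext_in. intros [a v] H. unfold hyp_entry. cbn. f_equal.
  apply A, I, (in_map snd _ _ H).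
Qed.

Lemma hyp_entry_split V h G G' a A :
  map (hyp_entry V) h = G -> Permutation G ((a, A) :: G') ->
  exists x h', Permutation h ((a, x) :: h') /\ vlab V x = A /\ map (hyp_entry V) h' = G'.
Proof.
  intros <- P. apply Permutation_sym, Permutation_map_inv in P as ([|[a' x] h'] & E & P);
    [discriminate|]. cbn in E. injection E as -> -> ->. exists x, h'. auto using Permutation_sym.
Qed.

Lemma ctx_vars_hyp_entry V h : ctx_vars (map (hyp_entry V) h) = ctx_vars h.
Proof. induction h as [|[a v] t IH]; [reflexivity|]. exact (f_equal (app (vars a)) IH). Qed.

Definition link_concls (L : list link) : list nat := flat_map lconcl L.
Definition link_prems (L : list link) : list nat := flat_map lprem L.

Lemma link_concls_cons l L : link_concls (l :: L) = lconcl l ++ link_concls L.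
Proof. reflexivity. Qed.

Lemma link_concls_app L1 L2 : link_concls (L1 ++ L2) = link_concls L1 ++ link_concls L2.
Proof. apply flat_map_app. Qed.

Lemma link_prems_cons l L : link_prems (l :: L) = lprem l ++ link_prems L.
Proof. reflexivity. Qed.

Lemma link_prems_app L1 L2 : link_prems (L1 ++ L2) = link_prems L1 ++ link_prems L2.
Proof. apply flat_map_app. Qed.

(* The two permutations encode that every vertex occurs exactly once as a
   hypothesis or a link conclusion, and exactly once as the root or a link premiss. *)
Record struct_inv (V : list (nat * formula)) (L : list link) (h : list (dstring * nat))
    (r : nat) (C : formula) (G : list (dstring * formula)) : Prop := {
  inv_nodup : NoDup (map fst V);
  inv_hyps : Permutation (map fst V) (map snd h ++ link_concls L);
  inv_root : Permutation (map fst V) (r :: link_prems L);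
  inv_root_lab : vlab V r = C;
  inv_ctx : map (hyp_entry V) h = G }.

Lemma inv_hyp_vertex V L h r C G : struct_inv V L h r C G -> incl (map snd h) (map fst V).
Proof.
  intros [_ P _ _ _] v Hv. apply (Permutation_in _ (Permutation_sym P)), in_or_app. now left.
Qed.

Lemma inv_root_vertex V L h r C G : struct_inv V L h r C G -> In r (map fst V).
Proof. intros [_ _ P _ _]. apply (Permutation_in _ (Permutation_sym P)). now left. Qed.

Ltac struct_perm :=
  cbn [map fst snd app] in *;
  rewrite ?map_app, ?link_concls_cons, ?link_concls_app, ?link_prems_cons, ?link_prems_app;
  solve_perm Nat.eq_dec.

Lemma struct_inv_tensor V1 L1 h1 r1 C1 G1 V2 L2 h2 r2 C2 G2 lk r C :
  struct_inv V1 L1 h1 r1 C1 G1 -> struct_inv V2 L2 h2 r2 C2 G2 ->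
  NoDup (r :: map fst V1 ++ map fst V2) -> lprem lk = [r1; r2] -> lconcl lk = [r] ->
  struct_inv ((r, C) :: V1 ++ V2) (lk :: L1 ++ L2) (h1 ++ h2) r C (G1 ++ G2).
Proof.
  intros S1 S2 N Lp Lc.
  pose proof (inv_hyp_vertex _ _ _ _ _ _ S1) as I1. pose proof (inv_hyp_vertex _ _ _ _ _ _ S2) as I2.
  inversion_clear N as [|? ? Nr N12]. rewrite <- map_app in Nr.
  destruct (agree_split _ _ _ N12 (agree_cons _ _ _ C Nr (agree_refl _))) as [A1 A2].
  destruct S1 as [_ H1 R1 _ <-], S2 as [_ H2 R2 _ <-]. split.
  - cbn. constructor; [exact Nr|now rewrite map_app].
  - rewrite link_concls_cons, Lc. struct_perm.
  - rewrite link_prems_cons, Lp. struct_perm.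
  - apply vlab_cons_eq.
  - rewrite map_app. f_equal; now apply hyp_entry_agree.
Qed.

Lemma struct_inv_intro V L h r0 C0 G a x h' lk r F :
  struct_inv V L h r0 C0 G -> ~ In r (map fst V) -> Permutation h ((a, x) :: h') ->
  lprem lk = [r0] -> Permutation (lconcl lk) [x; r] ->
  struct_inv ((r, F) :: V) (lk :: L) h' r F (map (hyp_entry V) h').
Proof.
  intros S Nr P Lp Lc. pose proof (inv_hyp_vertex _ _ _ _ _ _ S) as I.
  apply (Permutation_map snd) in P as Ps.
  destruct S as [N H R _ _]. split.
  - now constructor.
  - struct_perm.
  - rewrite link_prems_cons, Lp. struct_perm.
  - apply vlab_cons_eq.
  - apply hyp_entry_agree; [|exact (agree_cons _ _ _ F Nr (agree_refl _))].
    intros v Hv. apply I, (Permutation_in _ (Permutation_sym Ps)). now right.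
Qed.

Lemma struct_inv_par_elim V1 L1 h1 r1 C1 G1 V2 L2 h2 r2 C G2 a xa b xb h2' lk :
  struct_inv V1 L1 h1 r1 C1 G1 -> struct_inv V2 L2 h2 r2 C G2 ->
  NoDup (map fst V1 ++ map fst V2) -> Permutation h2 ((a, xa) :: (b, xb) :: h2') ->
  lprem lk = [r1] -> lconcl lk = [xa; xb] ->
  struct_inv (V1 ++ V2) (lk :: L1 ++ L2) (h1 ++ h2') r2 C (G1 ++ map (hyp_entry V2) h2').
Proof.
  intros S1 S2 N P Lp Lc.
  pose proof (inv_hyp_vertex _ _ _ _ _ _ S1) as I1. pose proof (inv_hyp_vertex _ _ _ _ _ _ S2) as I2.
  pose proof (inv_root_vertex _ _ _ _ _ _ S2) as Ir.
  apply (Permutation_map snd) in P as Ps.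
  destruct (agree_split _ _ _ N (agree_refl _)) as [A1 A2].
  destruct S1 as [_ H1 R1 _ <-], S2 as [_ H2 R2 <- _]. split.
  - now rewrite map_app.
  - rewrite link_concls_cons, Lc. struct_perm.
  - rewrite link_prems_cons, Lp. struct_perm.
  - exact (A2 r2 Ir).
  - rewrite map_app. f_equal; apply hyp_entry_agree; auto.
    intros v Hv. apply I2, (Permutation_in _ (Permutation_sym Ps)). now right; right.
Qed.

Definition in_range (V : list (nat * formula)) (n m : nat) : Prop :=
  forall v, In v (map fst V) -> n <= v < m.

(* [d] yields a proof structure on the vertices of [n, m) whose abstract proof
   structure contracts to the comb of the label of [d]. The expansions depend on
   the sorts of the auxiliary inputs, read in the labelling [W] of any larger
   structure agreeing with this one. *)
Definition net_above {G s C u} (d : deriv G s C u) (n : nat) : Prop :=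
  exists V L h r m, corr d V L h r /\ in_range V n m /\ struct_inv V L h r C G /\
    forall W sv, agree W V -> expansion_sorts_zero sv ->
      reduces sv (link_combs W L ++ hyp_combs h) [AComb (items s) (Old r)].

Lemma in_range_disjoint V1 V2 n m p :
  in_range V1 n m -> in_range V2 m p -> m <= p -> NoDup (map fst V1) -> NoDup (map fst V2) ->
  NoDup (p :: map fst V1 ++ map fst V2).
Proof.
  intros R1 R2 Le N1 N2. constructor.
  - intro H. apply in_app_or in H as [H|H]; [apply R1 in H|apply R2 in H]; lia.
  - apply NoDup_app; auto. intros v H1 H2. apply R1 in H1. apply R2 in H2. lia.
Qed.

Lemma net_above_tensor {G1 s1 C1 u1 G2 s2 C2 u2 s C u}
    (d1 : deriv G1 s1 C1 u1) (d2 : deriv G2 s2 C2 u2) (d : deriv (G1 ++ G2) s C u)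
    (lk : nat -> nat -> nat -> link) n :
  net_above d1 n -> (forall m, net_above d2 m) ->
  (forall r1 r2 r, lprem (lk r1 r2 r) = [r1; r2] /\ lconcl (lk r1 r2 r) = [r]) ->
  (forall V1 L1 h1 r1 V2 L2 h2 r2 r, corr d1 V1 L1 h1 r1 -> corr d2 V2 L2 h2 r2 ->
     NoDup (r :: map fst V1 ++ map fst V2) ->
     corr d ((r, C) :: V1 ++ V2) (lk r1 r2 r :: L1 ++ L2) (h1 ++ h2) r) ->
  (forall W sv r1 r2 r, expansion_sorts_zero sv ->
     reduces sv (aps_link W (lk r1 r2 r) ++ [AComb (items s1) (Old r1); AComb (items s2) (Old r2)])
       [AComb (items s) (Old r)]) ->
  net_above d n.
Proof.
  intros (V1 & L1 & h1 & r1 & m1 & Co1 & R1 & S1 & Red1) IH2 Lk Co Step.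
  destruct (IH2 m1) as (V2 & L2 & h2 & r2 & m2 & Co2 & R2 & S2 & Red2).
  destruct (Lk r1 r2 m2) as [Lp Lc].
  pose proof (R1 _ (inv_root_vertex _ _ _ _ _ _ S1)). pose proof (R2 _ (inv_root_vertex _ _ _ _ _ _ S2)).
  assert (N := in_range_disjoint _ _ _ _ _ R1 R2 ltac:(lia) (inv_nodup _ _ _ _ _ _ S1)
                 (inv_nodup _ _ _ _ _ _ S2)).
  exists ((m2, C) :: V1 ++ V2), (lk r1 r2 m2 :: L1 ++ L2), (h1 ++ h2), m2, (S m2).
  split; [exact (Co _ _ _ _ _ _ _ _ _ Co1 Co2 N)|].
  split; [|split; [eapply struct_inv_tensor; eauto|]].
  - intros v Hv. cbn in Hv. rewrite map_app in Hv.
    destruct Hv as [<-|Hv]; [|apply in_app_or in Hv as [Hv|Hv]]; [|apply R1 in Hv|apply R2 in Hv];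
      lia.
  - intros W sv A Z. inversion N as [|? ? Nr N12]. rewrite <- map_app in Nr.
    destruct (agree_split _ _ _ N12 (agree_cons _ _ _ _ Nr A)) as [A1 A2].
    eapply reduces_trans; [|exact (Step W sv r1 r2 m2 Z)].
    eapply reduces_trans;
      [|exact (reduces_app_l _ _ _ _ (reduces_app _ _ _ [_] [_] (Red1 W sv A1 Z) (Red2 W sv A2 Z)))].
    apply reduces_perm. rewrite link_combs_cons, link_combs_app, hyp_combs_app.
    solve_perm alink_eq_dec.
Qed.

Lemma net_above_intro {G s0 C0 u0 G' g F u} (d0 : deriv G s0 C0 u0) (d : deriv G' g F u)
    a A (lk : nat -> nat -> nat -> link) n :
  net_above d0 n -> Permutation G ((a, A) :: G') -> Permutation (vars s0) (vars a ++ vars g) ->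
  (forall r0 x r, lprem (lk r0 x r) = [r0] /\ Permutation (lconcl (lk r0 x r)) [x; r]) ->
  (forall V L h h' r0 x r, corr d0 V L h r0 -> Permutation h ((a, x) :: h') ->
     ~ In r (map fst V) -> corr d ((r, F) :: V) (lk r0 x r :: L) h' r) ->
  (forall W sv r0 x r p0 ps, expansion_sorts_zero sv -> a = hlab p0 ps -> NoDup (p0 :: ps) ->
     (forall p, In p (vars g) -> ~ In p (p0 :: ps)) -> fsort (vlab W x) = length ps ->
     exists P, aps_link W (lk r0 x r) = [P; AComb (expand x (length ps)) (Old x)] /\
       reduces sv [P; AComb (map (hyp_subst x (p0 :: ps)) (items s0)) (Old r0)]
         [AComb (items g) (Old r)]) ->
  net_above d n.
Proof.
  intros (V & L & h & r0 & m & Co & R & Si & Red) P Pv Lk Cor Step.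
  pose proof (deriv_fresh_labels _ _ _ _ d0) as Fr.
  destruct (hyp_entry_split _ _ _ _ _ _ (inv_ctx _ _ _ _ _ _ Si) P) as (x & h' & Ph & Ex & EG').
  destruct (fresh_labels_hyp _ _ _ _ _ _ Fr P) as (p0 & ps & Ea & Len & Np & Dctx).
  assert (Dg : forall p, In p (vars g) -> ~ In p (p0 :: ps)).
  { intros p Hp. apply Dctx, (fresh_incl _ _ _ (fresh_labels_drop _ _ _ _ _ _ _ Fr P Pv)), Hp. }
  rewrite <- EG', ctx_vars_hyp_entry in Dctx.
  assert (Nr : ~ In m (map fst V)) by (intro Hm; apply R in Hm; lia).
  assert (Ix : In x (map fst V)).
  { apply (inv_hyp_vertex _ _ _ _ _ _ Si), (Permutation_in _ (Permutation_sym (Permutation_map snd Ph))).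
    now left. }
  pose proof (R _ (inv_root_vertex _ _ _ _ _ _ Si)).
  destruct (Lk r0 x m) as [Lp Lc].
  exists ((m, F) :: V), (lk r0 x m :: L), h', m, (S m).
  split; [exact (Cor _ _ _ _ _ _ _ Co Ph Nr)|].
  split; [|split; [rewrite <- EG'; exact (struct_inv_intro _ _ _ _ _ _ _ _ _ _ _ F Si Nr Ph Lp Lc)|]].
  - intros v Hv. cbn in Hv. destruct Hv as [<-|Hv]; [lia|apply R in Hv; lia].
  - intros W sv Aw Z.
    assert (Fx : fsort (vlab W x) = length ps).
    { rewrite Aw by (right; exact Ix). rewrite vlab_cons_ne, Ex; [easy|]. intros ->. auto. }
    destruct (Step W sv r0 x m p0 ps Z Ea Np Dg Fx) as (Pl & E & Rs). subst a.
    assert (Rd := reduces_discharge sv _ h h' x p0 ps _ r0 Z Np Ph Dctx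
                    (rename_link_combs _ (fun _ => eq_refl) eq_refl W L)
                    (Red W sv (agree_cons _ _ _ _ Nr Aw) Z)).
    eapply reduces_trans; [|exact Rs].
    eapply reduces_trans; [|exact (reduces_app_l _ [Pl] _ _ Rd)].
    apply reduces_perm. rewrite link_combs_cons, E. solve_perm alink_eq_dec.
Qed.

Lemma net_above_par_elim {G1 s1 C1 u1 G2 s2 C u2 G2' s u}
    (d1 : deriv G1 s1 C1 u1) (d2 : deriv G2 s2 C u2) (d : deriv (G1 ++ G2') s C u)
    a A b B T (lk : nat -> nat -> nat -> link) n :
  net_above d1 n -> (forall m, net_above d2 m) ->
  Permutation G2 ((a, A) :: (b, B) :: G2') -> Permutation (vars s2) (vars a ++ vars b ++ T) ->
  (forall r1 xa xb, lprem (lk r1 xa xb) = [r1] /\ lconcl (lk r1 xa xb) = [xa; xb]) ->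
  (forall V1 L1 h1 r1 V2 L2 h2 h2' r2 xa xb, corr d1 V1 L1 h1 r1 -> corr d2 V2 L2 h2 r2 ->
     Permutation h2 ((a, xa) :: (b, xb) :: h2') -> NoDup (map fst V1 ++ map fst V2) ->
     corr d (V1 ++ V2) (lk r1 xa xb :: L1 ++ L2) (h1 ++ h2') r2) ->
  (forall W sv r1 r2 xa xb pa psa pb psb, expansion_sorts_zero sv ->
     a = hlab pa psa -> b = hlab pb psb -> NoDup (pa :: psa) -> NoDup (pb :: psb) ->
     (forall p, In p (pb :: psb) -> ~ In p (pa :: psa)) ->
     (forall p, In p T -> ~ In p (pa :: psa) /\ ~ In p (pb :: psb)) ->
     fsort (vlab W xa) = length psa -> fsort (vlab W xb) = length psb ->
     exists P, aps_link W (lk r1 xa xb) =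
       [P; AComb (expand xa (length psa)) (Old xa); AComb (expand xb (length psb)) (Old xb)] /\
     reduces sv [P; AComb (items s1) (Old r1);
       AComb (map (hyp_subst xb (pb :: psb)) (map (hyp_subst xa (pa :: psa)) (items s2))) (Old r2)]
       [AComb (items s) (Old r2)]) ->
  net_above d n.
Proof.
  intros (V1 & L1 & h1 & r1 & m1 & Co1 & R1 & S1 & Red1) IH2 P Pv Lk Cor Step.
  destruct (IH2 m1) as (V2 & L2 & h2 & r2 & m2 & Co2 & R2 & S2 & Red2).
  pose proof (deriv_fresh_labels _ _ _ _ d2) as Fr.
  destruct (hyp_entry_split _ _ _ _ _ _ (inv_ctx _ _ _ _ _ _ S2) P) as (xa & h2a & Pa & Exa & Ea').
  destruct (hyp_entry_split _ _ _ _ _ _ Ea' (Permutation_refl _)) as (xb & h2' & Pb & Exb & EG').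
  assert (Ph : Permutation h2 ((a, xa) :: (b, xb) :: h2')) by exact (perm_trans Pa (perm_skip _ Pb)).
  destruct (fresh_labels_hyp2 _ _ _ _ _ _ _ _ Fr P)
    as (pa & psa & pb & psb & Ea & Eb & Lena & Lenb & Na & Nb & Dab & Dctx).
  assert (DT : forall p, In p T -> ~ In p (pa :: psa) /\ ~ In p (pb :: psb)).
  { intros p Hp. apply Dctx, (fresh_incl _ _ _ (fresh_labels_drop2 _ _ _ _ _ _ _ _ _ Fr P Pv)), Hp. }
  rewrite <- EG', ctx_vars_hyp_entry in Dctx.
  assert (Ix : forall x, In x [xa; xb] -> In x (map fst V2)).
  { intros x Hx. apply (inv_hyp_vertex _ _ _ _ _ _ S2),
      (Permutation_in _ (Permutation_sym (Permutation_map snd Ph))).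
    destruct Hx as [<-|[<-|[]]]; [now left|now right; left]. }
  pose proof (R1 _ (inv_root_vertex _ _ _ _ _ _ S1)). pose proof (R2 _ (inv_root_vertex _ _ _ _ _ _ S2)).
  assert (N := in_range_disjoint _ _ _ _ _ R1 R2 ltac:(lia) (inv_nodup _ _ _ _ _ _ S1)
                 (inv_nodup _ _ _ _ _ _ S2)).
  inversion N as [|? ? _ N12]. clear N.
  destruct (Lk r1 xa xb) as [Lp Lc].
  exists (V1 ++ V2), (lk r1 xa xb :: L1 ++ L2), (h1 ++ h2'), r2, m2.
  split; [exact (Cor _ _ _ _ _ _ _ _ _ _ _ Co1 Co2 Ph N12)|].
  split; [|split; [rewrite <- EG'; eapply struct_inv_par_elim; eauto|]].
  - intros v Hv. rewrite map_app in Hv. apply in_app_or in Hv as [Hv|Hv];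
      [apply R1 in Hv|apply R2 in Hv]; lia.
  - intros W sv Aw Z.
    destruct (agree_split _ _ _ N12 Aw) as [A1 A2].
    assert (Fa : fsort (vlab W xa) = length psa) by (rewrite A2, Exa; auto; apply Ix; now left).
    assert (Fb : fsort (vlab W xb) = length psb) by (rewrite A2, Exb; auto; apply Ix; now right; left).
    destruct (Step W sv r1 r2 xa xb pa psa pb psb Z Ea Eb Na Nb Dab DT Fa Fb) as (Pl & E & Rs).
    subst a b.
    assert (Rd := reduces_discharge2 sv _ h2 h2' xa pa psa xb pb psb _ r2 Z Na Nb Ph Dab Dctx
                    (rename_link_combs _ (fun _ => eq_refl) eq_refl W L2)
                    (rename_link_combs _ (fun _ => eq_refl) eq_refl W L2) (Red2 W sv A2 Z)).
    eapply reduces_trans; [|exact Rs].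
    eapply reduces_trans;
      [|exact (reduces_app_l _ [Pl] _ _ (reduces_app _ _ _ [_] [_] (Red1 W sv A1 Z) Rd))].
    apply reduces_perm. rewrite link_combs_cons, E, link_combs_app, hyp_combs_app.
    solve_perm alink_eq_dec.
Qed.

(** * Local contractions *)

Lemma reduces_plus_link sv r1 r2 r p1 p2 :
  reduces sv [AComb [IV (Old r1); IV (Old r2)] (Old r); AComb p1 (Old r1); AComb p2 (Old r2)]
    [AComb (p1 ++ p2) (Old r)].
Proof.
  eapply reduces_trans; apply reduces_step.
  - exact (k_plus sv _ [AComb p2 (Old r2)] [] [IV (Old r2)] p1 (Old r1) (Old r) (Permutation_refl _)).
  - rewrite <- (app_nil_r p2) at 2.
    exact (k_plus sv _ [] p1 [] p2 (Old r2) (Old r) (Permutation_refl _)).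
Qed.

Lemma reduces_wrap_link sv k r1 r2 r a b s : wrap k a b s ->
  reduces sv [ATens k (Old r1) (Old r2) (Old r); AComb (items a) (Old r1); AComb (items b) (Old r2)]
    [AComb (items s) (Old r)].
Proof.
  intros (a1 & a2 & -> & K & ->). apply reduces_step. rewrite !map_app.
  apply (k_tens sv _ [] k (Old r1) (Old r2) (Old r) (items a1) (items a2)); [apply Permutation_refl|].
  now rewrite !isort_items.
Qed.

Lemma under_intro_step sv W r0 x r p0 ps g :
  NoDup (p0 :: ps) -> (forall p, In p (vars g) -> ~ In p (p0 :: ps)) ->
  fsort (vlab W x) = length ps ->
  exists P, aps_link W (LUnderR r0 x r) = [P; AComb (expand x (length ps)) (Old x)] /\
    reduces sv [P; AComb (map (hyp_subst x (p0 :: ps)) (items (hlab p0 ps ++ g))) (Old r0)]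
      [AComb (items g) (Old r)].
Proof.
  intros N Dg Fx. exists (AUnder (Old r0) (expand x (length ps)) (Old r)).
  split; [cbn; now rewrite Fx|].
  rewrite map_app, map_app, hyp_subst_hlab, hyp_subst_fresh by assumption.
  apply reduces_step, (k_under sv _ [] (Old r0) (expand x (length ps))), Permutation_refl.
Qed.

Lemma over_intro_step sv W r0 x r p0 ps g :
  NoDup (p0 :: ps) -> (forall p, In p (vars g) -> ~ In p (p0 :: ps)) ->
  fsort (vlab W x) = length ps ->
  exists P, aps_link W (LOverR r0 r x) = [P; AComb (expand x (length ps)) (Old x)] /\
    reduces sv [P; AComb (map (hyp_subst x (p0 :: ps)) (items (g ++ hlab p0 ps))) (Old r0)]
      [AComb (items g) (Old r)].
Proof.
  intros N Dg Fx. exists (AOver (Old r0) (expand x (length ps)) (Old r)).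
  split; [cbn; now rewrite Fx|].
  rewrite map_app, map_app, hyp_subst_hlab, hyp_subst_fresh by assumption.
  apply reduces_step, (k_over sv _ [] (Old r0) (expand x (length ps))), Permutation_refl.
Qed.

Lemma infix_intro_step sv W k r0 x r p0 ps g s :
  expansion_sorts_zero sv -> wrap k (hlab p0 ps) g s -> NoDup (p0 :: ps) ->
  (forall p, In p (vars g) -> ~ In p (p0 :: ps)) -> fsort (vlab W x) = length ps ->
  exists P, aps_link W (LInfixR k r0 x r) = [P; AComb (expand x (length ps)) (Old x)] /\
    reduces sv [P; AComb (map (hyp_subst x (p0 :: ps)) (items s)) (Old r0)]
      [AComb (items g) (Old r)].
Proof.
  intros Z Wr N Dg Fx. exists (AInfix k (Old r0) (expand x (length ps)) (Old r)).
  split; [cbn; now rewrite Fx|].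
  rewrite <- (hyp_subst_hlab x p0 ps N).
  destruct Wr as (a1 & a2 & -> & K & ->).
  rewrite !map_app, (hyp_subst_fresh x _ g Dg). cbn [map item_of_sym hyp_subst].
  apply reduces_step.
  apply (k_infix sv _ [] k (Old r0) (map (hyp_subst x (p0 :: ps)) (items a1))
           (map (hyp_subst x (p0 :: ps)) (items a2)) (items g) (Old r)); [apply Permutation_refl|].
  now rewrite !isort_hyp_subst.
Qed.

Lemma extr_intro_step sv W k r0 x r p0 ps g s :
  wrap k g (hlab p0 ps) s -> NoDup (p0 :: ps) ->
  (forall p, In p (vars g) -> ~ In p (p0 :: ps)) -> fsort (vlab W x) = length ps ->
  exists P, aps_link W (LExtrR k r0 r x) = [P; AComb (expand x (length ps)) (Old x)] /\
    reduces sv [P; AComb (map (hyp_subst x (p0 :: ps)) (items s)) (Old r0)]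
      [AComb (items g) (Old r)].
Proof.
  intros Wr N Dg Fx. exists (AExtr k (Old r0) (expand x (length ps)) (Old r)).
  split; [cbn; now rewrite Fx|].
  destruct Wr as (g1 & g2 & -> & K & ->). rewrite vars_app in Dg.
  rewrite !map_app, hyp_subst_hlab, !hyp_subst_fresh by (auto; intros p Hp; apply Dg, in_or_app; auto).
  apply reduces_step. change (items (SOne :: g2)) with (IOne :: items g2).
  apply (k_extr sv _ [] k (Old r0) (expand x (length ps)) (items g1) (items g2) (Old r));
    [apply Permutation_refl|].
  now rewrite !isort_items.
Qed.

Lemma prod_elim_step sv W r1 r2 xa xb pa psa pb psb dl g1 g2 :
  NoDup (pa :: psa) -> NoDup (pb :: psb) -> (forall p, In p (pb :: psb) -> ~ In p (pa :: psa)) ->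
  (forall p, In p (vars g1 ++ vars g2) -> ~ In p (pa :: psa) /\ ~ In p (pb :: psb)) ->
  fsort (vlab W xa) = length psa -> fsort (vlab W xb) = length psb ->
  exists P, aps_link W (LProdL r1 xa xb) =
    [P; AComb (expand xa (length psa)) (Old xa); AComb (expand xb (length psb)) (Old xb)] /\
  reduces sv [P; AComb (items dl) (Old r1);
    AComb (map (hyp_subst xb (pb :: psb)) (map (hyp_subst xa (pa :: psa))
             (items (g1 ++ hlab pa psa ++ hlab pb psb ++ g2)))) (Old r2)]
    [AComb (items (g1 ++ dl ++ g2)) (Old r2)].
Proof.
  intros Na Nb Dab DT Fa Fb.
  exists (AProd (Old r1) (expand xa (length psa)) (expand xb (length psb))).
  split; [cbn; now rewrite Fa, Fb|].
  assert (D1 : forall p, In p (vars g1) -> ~ In p (pa :: psa) /\ ~ In p (pb :: psb))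
    by (intros p Hp; apply DT, in_or_app; auto).
  assert (D2 : forall p, In p (vars g2) -> ~ In p (pa :: psa) /\ ~ In p (pb :: psb))
    by (intros p Hp; apply DT, in_or_app; auto).
  rewrite !map_app, hyp_subst_hlab, (hyp_subst_fresh xa _ (hlab pb psb)), (hyp_subst_fresh xa _ g1),
    (hyp_subst_fresh xa _ g2), (hyp_subst_fresh xb _ g1), (hyp_subst_fresh xb _ g2),
    rename_expand, hyp_subst_hlab
    by first [ reflexivity | assumption | rewrite vars_hlab; exact Dab
             | intros p Hp; first [ exact (proj1 (D1 p Hp)) | exact (proj2 (D1 p Hp))
                                  | exact (proj1 (D2 p Hp)) | exact (proj2 (D2 p Hp)) ] ].
  eapply reduces_trans; apply reduces_step.
  - apply (k_prod sv _ [AComb (items dl) (Old r1)] (Old r1) (expand xa (length psa))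
             (expand xb (length psb))).
    apply perm_skip, perm_swap.
  - exact (k_plus sv _ [] _ _ (items dl) (Old r1) (Old r2) (Permutation_refl _)).
Qed.

Lemma wrap_elim_step sv W k r1 r2 xa xb pa psa pb psb dl g1 g2 s :
  expansion_sorts_zero sv -> wrap k (hlab pa psa) (hlab pb psb) s ->
  NoDup (pa :: psa) -> NoDup (pb :: psb) -> (forall p, In p (pb :: psb) -> ~ In p (pa :: psa)) ->
  (forall p, In p (vars g1 ++ vars g2) -> ~ In p (pa :: psa) /\ ~ In p (pb :: psb)) ->
  fsort (vlab W xa) = length psa -> fsort (vlab W xb) = length psb ->
  exists P, aps_link W (LWrapL k r1 xa xb) =
    [P; AComb (expand xa (length psa)) (Old xa); AComb (expand xb (length psb)) (Old xb)] /\
  reduces sv [P; AComb (items dl) (Old r1);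
    AComb (map (hyp_subst xb (pb :: psb)) (map (hyp_subst xa (pa :: psa))
             (items (g1 ++ s ++ g2)))) (Old r2)]
    [AComb (items (g1 ++ dl ++ g2)) (Old r2)].
Proof.
  intros Z Wr Na Nb Dab DT Fa Fb.
  exists (AWrap k (Old r1) (expand xa (length psa)) (expand xb (length psb))).
  split; [cbn; now rewrite Fa, Fb|].
  assert (D1 : forall p, In p (vars g1) -> ~ In p (pa :: psa) /\ ~ In p (pb :: psb))
    by (intros p Hp; apply DT, in_or_app; auto).
  assert (D2 : forall p, In p (vars g2) -> ~ In p (pa :: psa) /\ ~ In p (pb :: psb))
    by (intros p Hp; apply DT, in_or_app; auto).
  rewrite <- (hyp_subst_hlab xa pa psa Na).
  destruct Wr as (a1 & a2 & Ea & K & ->).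
  assert (Da : forall p, In p (vars a1 ++ vars a2) -> ~ In p (pb :: psb)).
  { intros p Hp Hb. apply (Dab p Hb). rewrite <- vars_hlab, Ea, vars_app. exact Hp. }
  rewrite Ea, !map_app, (hyp_subst_fresh xa _ g1), (hyp_subst_fresh xa _ g2),
    (hyp_subst_fresh xa _ (hlab pb psb)), (hyp_subst_fresh xb _ g1), (hyp_subst_fresh xb _ g2),
    hyp_subst_hlab, !hyp_subst_twice
    by first [ assumption | rewrite vars_hlab; exact Dab
             | intros p Hp; apply Da, in_or_app; tauto
             | intros p Hp; first [ exact (proj1 (D1 p Hp)) | exact (proj2 (D1 p Hp))
                                  | exact (proj1 (D2 p Hp)) | exact (proj2 (D2 p Hp)) ] ].
  change (items (SOne :: a2)) with (IOne :: items a2).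
  cbn [map hyp_subst]. rewrite <- !app_assoc.
  eapply reduces_trans; apply reduces_step.
  - apply (k_wrap sv _ [AComb (items dl) (Old r1)] k (Old r1)
             (map (hyp_subst xa (pa :: psa)) (items a1)) (map (hyp_subst xa (pa :: psa)) (items a2))
             (expand xb (length psb)));
      [apply perm_skip, perm_swap|now rewrite !isort_hyp_subst].
  - exact (k_plus sv _ [] _ _ (items dl) (Old r1) (Old r2) (Permutation_refl _)).
Qed.

Lemma deriv_net_above G s C u (d : deriv G s C u) : forall n, net_above d n.
Proof.
  induction d as [p0 ps A N Len Wf | G1 G2 a g A C u1 u2 d1 IH1 d2 IH2 H
    | G G' a g A C u d IH P Wf | G1 G2 g b B C u1 u2 d1 IH1 d2 IH2 H
    | G G' g b B C u d IH P Wf | G1 G2 a b A B u1 u2 d1 IH1 d2 IH2 H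
    | G1 G2 G2' dl a b g1 g2 A B C u1 u2 d1 IH1 d2 IH2 P H
    | k G1 G2 a g s A C u1 u2 d1 IH1 d2 IH2 Wr H | k G G' a g s A C u d IH P Wr Wf
    | k G1 G2 g b s B C u1 u2 d1 IH1 d2 IH2 Wr H | k G G' g b s B C u d IH P Wr Wf
    | k G1 G2 a b s A B u1 u2 d1 IH1 d2 IH2 Wr H
    | k G1 G2 G2' dl a b s g1 g2 A B C u1 u2 d1 IH1 d2 IH2 P Wr H]; intro n.
  - exists [(n, A)], [], [(hlab p0 ps, n)], n, (S n). split; [apply c_hyp|].
    split; [intros v [<-|[]]; cbn; lia|]. split.
    + split; cbn; unfold hyp_entry; cbn; rewrite ?Nat.eqb_refl; auto using NoDup_cons, NoDup_nil.
    + intros W sv _ _. apply reduces_perm, Permutation_refl.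
  - apply (net_above_tensor d1 d2 _ LUnderL n (IH1 n) IH2);
      [now split|intros; now apply c_underE|intros; rewrite map_app; apply reduces_plus_link].
  - apply (net_above_intro d _ a A (fun r0 x r => LUnderR r0 x r) n (IH n) P);
      [now rewrite vars_app|now split|intros; eapply c_underI; eauto|].
    intros W sv r0 x r p0 ps _ ->. apply under_intro_step.
  - apply (net_above_tensor d1 d2 _ LOverL n (IH1 n) IH2);
      [now split|intros; now apply c_overE|intros; rewrite map_app; apply reduces_plus_link].
  - apply (net_above_intro d _ b B (fun r0 x r => LOverR r0 r x) n (IH n) P);
      [rewrite vars_app; apply Permutation_app_comm|split; [reflexivity|apply perm_swap]
      |intros; eapply c_overI; eauto|].
    intros W sv r0 x r p0 ps _ ->. apply over_intro_step.
  - apply (net_above_tensor d1 d2 _ LProdR n (IH1 n) IH2);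
      [now split|intros; now apply c_prodI|intros; rewrite map_app; apply reduces_plus_link].
  - apply (net_above_par_elim d1 d2 _ a A b B (vars g1 ++ vars g2) LProdL n (IH1 n) IH2 P);
      [rewrite !vars_app; solve_perm Nat.eq_dec|now split|intros; eapply c_prodE; eauto|].
    intros W sv r1 r2 xa xb pa psa pb psb _ -> ->. apply prod_elim_step.
  - apply (net_above_tensor d1 d2 _ (LInfixL k) n (IH1 n) IH2);
      [now split|intros; now apply c_infixE|intros; now apply reduces_wrap_link].
  - apply (net_above_intro d _ a A (fun r0 x r => LInfixR k r0 x r) n (IH n) P (wrap_vars _ _ _ _ Wr));
      [now split|intros; eapply c_infixI; eauto|].
    intros W sv r0 x r p0 ps Z ->. now apply infix_intro_step.
  - apply (net_above_tensor d1 d2 _ (LExtrL k) n (IH1 n) IH2);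
      [now split|intros; now apply c_extrE|intros; now apply reduces_wrap_link].
  - apply (net_above_intro d _ b B (fun r0 x r => LExtrR k r0 r x) n (IH n) P);
      [apply wrap_vars in Wr; solve_perm Nat.eq_dec|split; [reflexivity|apply perm_swap]
      |intros; eapply c_extrI; eauto|].
    intros W sv r0 x r p0 ps _ ->. now apply extr_intro_step.
  - apply (net_above_tensor d1 d2 _ (LWrapR k) n (IH1 n) IH2);
      [now split|intros; now apply c_wrapI|intros; now apply reduces_wrap_link].
  - apply (net_above_par_elim d1 d2 _ a A b B (vars g1 ++ vars g2) (LWrapL k) n (IH1 n) IH2 P);
      [apply wrap_vars in Wr; rewrite !vars_app; solve_perm Nat.eq_dec|now split
      |intros; eapply c_wrapE; eauto|].
    intros W sv r1 r2 xa xb pa psa pb psb Z -> ->. now apply wrap_elim_step.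
Qed.

Lemma is_hyp_iff V L hs :
  NoDup (map fst V) -> Permutation (map fst V) (hs ++ link_concls L) ->
  forall v, is_hyp V L v <-> In v hs.
Proof.
  intros N P v. apply (Permutation_NoDup P), NoDup_app_iff in N as (_ & _ & D).
  unfold is_hyp. rewrite <- (in_flat_map lconcl). fold (link_concls L). split.
  - intros [Hv Hc]. apply (Permutation_in _ P), in_app_or in Hv as [Hv|Hv]; tauto.
  - intro Hv. split; [|exact (D v Hv)].
    apply (Permutation_in _ (Permutation_sym P)), in_or_app. now left.
Qed.

Lemma is_concl_iff V L r :
  NoDup (map fst V) -> Permutation (map fst V) (r :: link_prems L) ->
  forall v, is_concl V L v <-> v = r.
Proof.
  intros N P v. apply (Permutation_NoDup P) in N. inversion_clear N as [|? ? Nr _].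
  unfold is_concl. rewrite <- (in_flat_map lprem). fold (link_prems L). split.
  - intros [Hv Hc]. apply (Permutation_in _ P) in Hv as [<-|Hv]; tauto.
  - intros ->. split; [|exact Nr]. apply (Permutation_in _ (Permutation_sym P)). now left.
Qed.

Lemma aps_hyp_combs V L h :
  aps V L (combine (map snd h) (map fst h)) = link_combs V L ++ hyp_combs h.
Proof.
  unfold aps. f_equal. induction h as [|[a v] t IH]; [reflexivity|]. cbn. f_equal. exact IH.
Qed.

Theorem lemma1 (G : list (dstring * formula)) (g : dstring) (C : formula)
    (u : list nat) (d : deriv G g C u) :
  exists (V : list (nat * formula)) (L : list link) (hs : list nat) (r : nat),
    proof_net V L /\
    NoDup hs /\ (forall v, is_hyp V L v <-> In v hs) /\
    map (vlab V) hs = map snd G /\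
    (forall v, is_concl V L v <-> v = r) /\ vlab V r = C /\
    clos_refl_trans _ (contr (vsort V))
      (aps V L (combine hs (map fst G)))
      (AComb (map item_of_sym g) (Old r) :: nil).
Proof.
  destruct (deriv_net_above G g C u d 0) as (V & L & h & r & m & Co & _ & [N Ph Pr Er <-] & Red).
  exists V, L, (map snd h), r.
  assert (Hyp := is_hyp_iff V L _ N Ph). assert (Concl := is_concl_iff V L r N Pr).
  apply (Permutation_NoDup Ph), NoDup_app_iff in N as (Nh & _).
  split; [do 4 eexists; exists d, h, r; exact Co|].
  split; [exact Nh|]. split; [exact Hyp|]. split; [now rewrite !map_map|].
  split; [exact Concl|]. split; [exact Er|].
  destruct (Red V (vsort V) (agree_refl V) (fun _ _ => eq_refl)) as (M & Hr & HM).
  apply Permutation_sym, Permutation_length_1_inv in HM. subst M.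
  rewrite map_map. cbn. now rewrite aps_hyp_combs.
Qed.
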